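(* Let $(X,\|\cdot\|)$ be a real Banach space, $T\in(0,\infty]$, $a<0<b$. Let $f:\Omega(T,b)\to X$ satisfy hypothesis (LC) and let $g:\tilde\Omega(T,a,b)\to\mathbb R$ satisfy hypothesis (MJ) with respect to $f$. Fix $x\in X$ with $\|x\|<b$. Let $\varphi:(\alpha,\beta)\to X$ be the maximal solution of $y'=f(t,y)$, $y(0)=x$, and $\psi:(\tilde\alpha,\tilde\beta)\to\mathbb R$ the maximal solution of $z'=g(t,z)$, $z(0)=\|x\|$. Then $\tilde\beta\le\beta$ and $\|\varphi(t)\|\le\psi(t)$ for every $t\in[0,\tilde\beta)$.
   Context: $\tilde\Omega(T,a,b):=(-T,T)\times(a,b)\subset\mathbb R^2$ and $\Omega(T,b):=(-T,T)\times D(0,b)\subset\mathbb R\times X$, where $D(0,b)=\{y\in X:\|y\|<b\}$. Hypothesis (LC) for $f:\Omega(T,b)\to X$: $f$ is continuous and for every compact $K\subset\Omega(T,b)$ there is $C=C(K)>0$ with $\|f(t,y)-f(t,y')\|\le C\|y-y'\|$ for all $(t,y),(t,y')\in K$. Hypothesis (MJ) for $g:\tilde\Omega(T,a,b)\to\mathbb R$ with respect to $f$: (i) $g$ is continuous and locally Lipschitz continuous with respect to $z$; (ii) for every fixed $t\in[0,T)$ the map $[0,b)\ni z\mapsto g(t,z)$ is non-decreasing; (iii) $\|f(t,y)\|\le g(|t|,\|y\|)$ for all $(t,y)\in\Omega(T,b)$. Maximal solutions are solutions defined on the largest open interval containing $0$. *)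

From Stdlib Require Import Reals Lra List.
Open Scope R_scope.
Set Implicit Arguments.

Record Banach : Type := {
  BT :> Type;
  bzero : BT;
  badd : BT -> BT -> BT;
  bopp : BT -> BT;
  bscal : R -> BT -> BT;
  bnorm : BT -> R;
  badd_assoc : forall x y z, badd x (badd y z) = badd (badd x y) z;
  badd_comm : forall x y, badd x y = badd y x;
  badd_zero : forall x, badd x bzero = x;
  badd_opp : forall x, badd x (bopp x) = bzero;
  bscal_one : forall x, bscal 1 x = x;
  bscal_assoc : forall a c x, bscal a (bscal c x) = bscal (a * c) x;
  bscal_distr_v : forall a x y, bscal a (badd x y) = badd (bscal a x) (bscal a y);
  bscal_distr_s : forall a c x, bscal (a + c) x = badd (bscal a x) (bscal c x);
  bnorm_nonneg : forall x, 0 <= bnorm x;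
  bnorm_eq0 : forall x, bnorm x = 0 -> x = bzero;
  bnorm_scal : forall a x, bnorm (bscal a x) = Rabs a * bnorm x;
  bnorm_triangle : forall x y, bnorm (badd x y) <= bnorm x + bnorm y;
  bcomplete : forall u : nat -> BT,
    (forall eps, 0 < eps -> exists N, forall m n, (N <= m)%nat -> (N <= n)%nat ->
        bnorm (badd (u m) (bopp (u n))) < eps) ->
    exists l, forall eps, 0 < eps -> exists N, forall n, (N <= n)%nat ->
        bnorm (badd (u n) (bopp l)) < eps
}.
Arguments bzero {_}. Arguments badd {_}. Arguments bopp {_}.
Arguments bscal {_}. Arguments bnorm {_}.

Definition bsub (X : Banach) (x y : X) : X := badd x (bopp y).
Arguments bsub {X}.

(** Extended endpoints: [None] encodes +oo for upper bounds, -oo for lower bounds. *)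
Definition below (u : option R) (t : R) : Prop :=
  match u with Some u => t < u | None => True end.
Definition above (l : option R) (t : R) : Prop :=
  match l with Some l => l < t | None => True end.
Definition in_int (l u : option R) (t : R) : Prop := above l t /\ below u t.
Definition upper_le (u1 u2 : option R) : Prop :=
  match u1, u2 with
  | _, None => True
  | None, Some _ => False
  | Some x, Some y => x <= y
  end.
Definition lower_le (l1 l2 : option R) : Prop :=
  match l1, l2 with
  | None, _ => True
  | Some _, None => False
  | Some x, Some y => x <= y
  end.

Definition pos_ext (T : option R) : Prop :=
  match T with Some T => 0 < T | None => True end.

Definition Omega (X : Banach) (T : option R) (b : R) (t : R) (y : X) : Prop :=
  below T (Rabs t) /\ bnorm y < b.
Definition OmegaT (T : option R) (a b : R) (t z : R) : Prop :=
  below T (Rabs t) /\ a < z < b.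
Arguments Omega {X}.

Definition open_RX (X : Banach) (U : R -> X -> Prop) : Prop :=
  forall t y, U t y -> exists r, 0 < r /\
    forall s (z : X), Rabs (s - t) < r -> bnorm (bsub z y) < r -> U s z.
Arguments open_RX {X}.
Definition compact_RX (X : Banach) (K : R -> X -> Prop) : Prop :=
  forall (I : Type) (U : I -> R -> X -> Prop),
    (forall i, open_RX (U i)) ->
    (forall t (y : X), K t y -> exists i, U i t y) ->
    exists l : list I, forall t (y : X), K t y -> exists i, In i l /\ U i t y.
Arguments compact_RX {X}.

Definition hyp_LC (X : Banach) (T : option R) (b : R) (f : R -> X -> X) : Prop :=
  (forall t (y : X), Omega T b t y -> forall eps, 0 < eps -> exists delta, 0 < delta /\
     forall s (z : X), Omega T b s z -> Rabs (s - t) < delta -> bnorm (bsub z y) < delta ->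
       bnorm (bsub (f s z) (f t y)) < eps)
  /\
  (forall K : R -> X -> Prop, compact_RX K -> (forall t (y : X), K t y -> Omega T b t y) ->
     exists C, 0 < C /\ forall t (y y' : X), K t y -> K t y' ->
       bnorm (bsub (f t y) (f t y')) <= C * bnorm (bsub y y')).
Arguments hyp_LC {X}.

Definition hyp_MJ (X : Banach) (T : option R) (a b : R)
    (f : R -> X -> X) (g : R -> R -> R) : Prop :=
  (forall t z, OmegaT T a b t z -> forall eps, 0 < eps -> exists delta, 0 < delta /\
     forall s w, OmegaT T a b s w -> Rabs (s - t) < delta -> Rabs (w - z) < delta ->
       Rabs (g s w - g t z) < eps)
  /\
  (forall t0 z0, OmegaT T a b t0 z0 -> exists r L, 0 < r /\
     forall t z1 z2, OmegaT T a b t z1 -> OmegaT T a b t z2 ->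
       Rabs (t - t0) < r -> Rabs (z1 - z0) < r -> Rabs (z2 - z0) < r ->
       Rabs (g t z1 - g t z2) <= L * Rabs (z1 - z2))
  /\
  (forall t, 0 <= t -> below T t -> forall z1 z2, 0 <= z1 -> z1 <= z2 -> z2 < b ->
     g t z1 <= g t z2)
  /\
  (forall t (y : X), Omega T b t y -> bnorm (f t y) <= g (Rabs t) (bnorm y)).
Arguments hyp_MJ {X}.

Definition has_deriv (X : Banach) (phi : R -> X) (t : R) (v : X) : Prop :=
  forall eps, 0 < eps -> exists delta, 0 < delta /\
    forall h, h <> 0 -> Rabs h < delta ->
      bnorm (bsub (bscal (/ h) (bsub (phi (t + h)) (phi t))) v) < eps.
Arguments has_deriv {X}.

Definition is_sol (X : Banach) (T : option R) (b : R) (f : R -> X -> X) (x : X)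
    (al be : option R) (phi : R -> X) : Prop :=
  in_int al be 0 /\ phi 0 = x /\
  forall t, in_int al be t -> Omega T b t (phi t) /\ has_deriv phi t (f t (phi t)).
Arguments is_sol {X}.

Definition is_max_sol (X : Banach) (T : option R) (b : R) (f : R -> X -> X) (x : X)
    (al be : option R) (phi : R -> X) : Prop :=
  is_sol T b f x al be phi /\
  forall al' be' phi', is_sol T b f x al' be' phi' -> lower_le al al' /\ upper_le be' be.
Arguments is_max_sol {X}.

Definition is_solR (T : option R) (a b : R) (g : R -> R -> R) (z0 : R)
    (al be : option R) (psi : R -> R) : Prop :=
  in_int al be 0 /\ psi 0 = z0 /\
  forall t, in_int al be t -> OmegaT T a b t (psi t) /\ derivable_pt_lim psi t (g t (psi t)).

Definition is_max_solR (T : option R) (a b : R) (g : R -> R -> R) (z0 : R)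
    (al be : option R) (psi : R -> R) : Prop :=
  is_solR T a b g z0 al be psi /\
  forall al' be' psi', is_solR T a b g z0 al' be' psi' -> lower_le al al' /\ upper_le be' be.

From Pilot Require Import Defs.
From Stdlib Require Import Arith ZArith Reals Lra Lia List Classical ClassicalEpsilon
  FunctionalExtensionality PropExtensionality.
From Coquelicot Require Import Coquelicot.
Import Defs.
Open Scope R_scope.

(** Forward in time, [t |-> ||phi t||] is a subsolution of the majorant
    equation in the sense of right Dini derivatives, because
    [||f(t, y)|| <= g(t, ||y||)]; a comparison principle for Dini
    subsolutions then gives [||phi t|| <= psi t] on the common interval.  The
    same argument, using the monotonicity of [g] in [z], bounds the increments
    [||phi s - phi t|| <= psi s - psi t].  If [phi] ceased to exist at some
    [beta < bet], these bounds would make [phi t] converge as [t -> beta] to a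
    point of [Omega]; a local solution through a nearby point, whose time of
    existence is uniform thanks to (LC), would then extend [phi] beyond
    [beta], contradicting maximality. *)

Arguments badd_assoc {_}. Arguments badd_comm {_}. Arguments badd_zero {_}.
Arguments badd_opp {_}. Arguments bscal_one {_}. Arguments bscal_assoc {_}.
Arguments bscal_distr_v {_}. Arguments bscal_distr_s {_}. Arguments bnorm_nonneg {_}.
Arguments bnorm_eq0 {_}. Arguments bnorm_scal {_}. Arguments bnorm_triangle {_}.
Arguments bcomplete {_}.

Lemma INR_unbounded (C : R) : exists n : nat, C < INR n.
Proof.
  destruct (archimed C) as [HC _]. destruct (Rle_or_lt 0 C) as [H0|H0].
  - exists (Z.to_nat (up C)). rewrite INR_IZR_INZ, Z2Nat.id; [lra|].
    apply le_IZR. lra.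
  - exists O. simpl. lra.
Qed.

Lemma vanishing_radii (rho : R) : 0 < rho -> exists rn : nat -> R,
  (forall n, 0 < rn n <= rho) /\
  (forall eps, 0 < eps -> exists N, forall n, (N <= n)%nat -> rn n < eps).
Proof.
  intro Hrho. exists (fun n => rho / (INR n + 1)). split.
  - intro n. pose proof (pos_INR n). split; [apply Rdiv_lt_0_compat; lra|].
    apply Rmult_le_reg_r with (INR n + 1); [lra|]. unfold Rdiv.
    rewrite Rmult_assoc, Rinv_l by lra. nra.
  - intros eps He. destruct (INR_unbounded (rho / eps)) as [N HN]. exists N. intros n Hn.
    apply le_INR in Hn. pose proof (pos_INR N).
    apply Rmult_lt_reg_r with (INR n + 1); [lra|]. unfold Rdiv.
    rewrite Rmult_assoc, Rinv_l by lra.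
    apply Rmult_lt_compat_r with (r := eps) in HN; [|lra]. unfold Rdiv in HN.
    rewrite Rmult_assoc, Rinv_l in HN by lra. nra.
Qed.

Lemma inv_pow2_small (e : R) : 0 < e -> exists n, / 2 ^ n < e.
Proof.
  intros He. destruct (INR_unbounded (/ e)) as [n Hn]. exists n.
  assert (Hlt : INR n < 2 ^ n).
  { clear. induction n as [|n IH]; [simpl; lra|].
    rewrite S_INR. simpl. pose proof (pow_R1_Rle 2 n ltac:(lra)). lra. }
  rewrite <- (Rinv_inv e). apply Rinv_lt_contravar; [|lra].
  apply Rmult_lt_0_compat; [apply Rinv_0_lt_compat; lra | apply pow_lt; lra].
Qed.

Section BanachNorm.
Context {X : Banach}.
Implicit Types x y z : X.

Lemma bscal_zero x : bscal 0 x = bzero.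
Proof.
  assert (Hdouble : badd (bscal 0 x) (bscal 0 x) = bscal 0 x).
  { rewrite <- bscal_distr_s. f_equal; ring. }
  set (u := bscal 0 x) in *.
  transitivity (badd (badd u u) (bopp u)).
  - rewrite <- badd_assoc, badd_opp, badd_zero. reflexivity.
  - rewrite Hdouble, badd_opp. reflexivity.
Qed.

Lemma bopp_scal x : bopp x = bscal (-1) x.
Proof.
  assert (Hinv : badd x (bscal (-1) x) = bzero).
  { rewrite <- (bscal_one x) at 1. rewrite <- bscal_distr_s.
    replace (1 + -1) with 0 by ring. apply bscal_zero. }
  rewrite <- (badd_zero (bopp x)), <- Hinv, badd_assoc, (badd_comm (bopp x) x),
    badd_opp, badd_comm, badd_zero.
  reflexivity.
Qed.

Lemma bnorm_sub_sym x y : bnorm (bsub x y) = bnorm (bsub y x).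
Proof.
  assert (Hopp : forall z, bnorm (bopp z) = bnorm z).
  { intro z. rewrite bopp_scal, bnorm_scal, Rabs_left; lra. }
  unfold bsub. rewrite <- Hopp. f_equal.
  rewrite !bopp_scal, bscal_distr_v, bscal_assoc.
  replace (-1 * -1) with 1 by ring. rewrite bscal_one. apply badd_comm.
Qed.

Lemma bnorm_sub_triangle x y z : bnorm (bsub x z) <= bnorm (bsub x y) + bnorm (bsub y z).
Proof.
  replace (bsub x z) with (badd (bsub x y) (bsub y z)) by
    (unfold bsub; rewrite <- badd_assoc, (badd_assoc (bopp y)), (badd_comm (bopp y) y),
       badd_opp, (badd_comm bzero), badd_zero; reflexivity).
  apply bnorm_triangle.
Qed.

End BanachNorm.

Section BanachAsNormedModule.
Variable X : Banach.

(** The Coquelicot structures carried by [X]: module, uniform space with the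
    norm balls, normed module.  They give access to Coquelicot's algebra and
    to its Riemann integral of [X]-valued functions. *)
Definition X_AbelianMonoid_mixin : AbelianMonoid.mixin_of X :=
  AbelianMonoid.Mixin X badd bzero (@badd_comm X) (@badd_assoc X) (@badd_zero X).
Definition X_AbelianMonoid : AbelianMonoid := AbelianMonoid.Pack X X_AbelianMonoid_mixin X.
Definition X_AbelianGroup_class : AbelianGroup.class_of X :=
  AbelianGroup.Class _ X_AbelianMonoid_mixin
    (AbelianGroup.Mixin X_AbelianMonoid bopp (@badd_opp X)).
Definition X_AbelianGroup : AbelianGroup := AbelianGroup.Pack X X_AbelianGroup_class X.
Definition X_ModuleSpace_class : ModuleSpace.class_of R_Ring X :=
  ModuleSpace.Class _ _ X_AbelianGroup_class
    (ModuleSpace.Mixin R_Ring X_AbelianGroup bscal (@bscal_assoc X) (@bscal_one X)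
       (@bscal_distr_v X) (@bscal_distr_s X)).
Definition X_ModuleSpace : ModuleSpace R_Ring := ModuleSpace.Pack R_Ring X X_ModuleSpace_class X.

Definition Xball (x : X) (e : R) (y : X) := bnorm (bsub y x) < e.

Definition X_UniformSpace_mixin : UniformSpace.mixin_of X.
Proof.
  refine (UniformSpace.Mixin X bzero Xball _ _ _); unfold Xball.
  - intros x e. unfold bsub. rewrite badd_opp, <- (bscal_zero bzero), bnorm_scal, Rabs_R0,
      Rmult_0_l. apply cond_pos.
  - intros x y e. rewrite bnorm_sub_sym. auto.
  - intros x y z e1 e2 H1 H2. pose proof (bnorm_sub_triangle z y x). lra.
Defined.
Definition X_UniformSpace : UniformSpace := UniformSpace.Pack X X_UniformSpace_mixin X.

Definition X_NormedModuleAux_class : NormedModuleAux.class_of R_AbsRing X :=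
  NormedModuleAux.Class _ _ X_ModuleSpace_class X_UniformSpace_mixin.
Definition X_NormedModuleAux : NormedModuleAux R_AbsRing :=
  NormedModuleAux.Pack _ X X_NormedModuleAux_class X.

Definition X_NormedModule_class : NormedModule.class_of R_AbsRing X.
Proof.
  refine (NormedModule.Class _ _ X_NormedModuleAux_class
            (NormedModule.Mixin R_AbsRing X_NormedModuleAux bnorm 1 _ _ _ _ _)).
  - intros. apply bnorm_triangle.
  - intros l u. right. apply (bnorm_scal l u).
  - intros u v eps H. exact H.
  - intros u v eps H. rewrite Rmult_1_l. exact H.
  - intros u H. apply bnorm_eq0, H.
Defined.
Definition X_NormedModule : NormedModule R_AbsRing :=
  NormedModule.Pack _ X X_NormedModule_class X.

Definition Xlim (F : (X -> Prop) -> Prop) : X :=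
  epsilon (inhabits bzero) (fun l => forall eps : posreal, F (Xball l eps)).

Lemma Xlim_spec (F : (X -> Prop) -> Prop) :
  ProperFilter F -> (forall eps : posreal, exists x, F (Xball x eps)) ->
  forall eps : posreal, F (Xball (Xlim F) eps).
Proof.
  intros PF HC. unfold Xlim. apply epsilon_spec.
  assert (Hpos : forall n, 0 < / 2 ^ n) by (intro n; apply Rinv_0_lt_compat, pow_lt; lra).
  destruct (choice (fun n x => F (Xball x (/ 2 ^ n))) (fun n => HC (mkposreal _ (Hpos n))))
    as [u Hu].
  assert (Hclose : forall n m, bnorm (bsub (u n) (u m)) < / 2 ^ n + / 2 ^ m).
  { intros n m. destruct PF as [PF1 PF2].
    destruct (PF1 _ (filter_and _ _ (Hu n) (Hu m))) as [y [Hy1 Hy2]]. unfold Xball in *.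
    pose proof (bnorm_sub_triangle (u n) y (u m)). rewrite (bnorm_sub_sym (u n) y) in H. lra. }
  assert (Hmono : forall n m, (n <= m)%nat -> / 2 ^ m <= / 2 ^ n).
  { intros n m Hnm. apply Rinv_le_contravar; [apply pow_lt; lra|]. apply Rle_pow; auto; lra. }
  destruct (bcomplete u) as [l Hl].
  { intros eps He. destruct (inv_pow2_small (eps/2)) as [N HN]; [lra|].
    exists N. intros m n Hm Hn. specialize (Hclose m n).
    pose proof (Hmono _ _ Hm). pose proof (Hmono _ _ Hn). unfold bsub in Hclose. lra. }
  exists l. intros eps.
  destruct (inv_pow2_small (eps/2)) as [N1 HN1]; [destruct eps; simpl; lra|].
  destruct (Hl (eps/2)) as [N2 HN2]; [destruct eps; simpl; lra|].
  apply filter_imp with (2 := Hu (max N1 N2)). intros y Hy. unfold Xball in *.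
  pose proof (bnorm_sub_triangle y (u (max N1 N2)) l).
  pose proof (HN2 (max N1 N2) (Nat.le_max_r _ _)).
  pose proof (Hmono N1 (max N1 N2) (Nat.le_max_l _ _)). unfold bsub in *. lra.
Qed.

Definition X_CompleteNormedModule : CompleteNormedModule R_AbsRing.
Proof.
  refine (CompleteNormedModule.Pack _ X
            (CompleteNormedModule.Class _ _ X_NormedModule_class
               (CompleteSpace.Mixin X_UniformSpace Xlim _ _)) X).
  - intros F PF HC eps. apply Xlim_spec; auto.
  - intros F1 F2 H12 H21.
    assert (F1 = F2) as -> by (apply functional_extensionality; intro P;
                                apply propositional_extensionality; split; auto).
    intro e. apply (UniformSpace.ax1 _ X_UniformSpace_mixin).
Defined.

End BanachAsNormedModule.

Canonical X_AbelianMonoid. Canonical X_AbelianGroup. Canonical X_ModuleSpace.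
Canonical X_UniformSpace. Canonical X_NormedModuleAux. Canonical X_NormedModule.
Canonical X_CompleteNormedModule.

Lemma continuity_pt_eps (q : R -> R) (s : R) : continuity_pt q s ->
  forall eps, 0 < eps -> exists del, 0 < del /\
    forall s', Rabs (s' - s) < del -> Rabs (q s' - q s) < eps.
Proof.
  intros Hq eps He. destruct (Hq eps He) as [del [Hd Hy]]. exists del. split; auto.
  intros s' Hs'. destruct (Req_dec s' s) as [ ->|Hne].
  - rewrite Rminus_diag, Rabs_R0. exact He.
  - apply Hy. repeat split; auto.
Qed.

Lemma nonpos_left_closed (q : R -> R) (c s : R) : c < s -> continuity_pt q s ->
  (forall s', c <= s' < s -> q s' <= 0) -> q s <= 0.
Proof.
  intros Hcs Hq Hle. apply Rnot_lt_le. intro Hpos.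
  destruct (continuity_pt_eps q s Hq (q s / 2) ltac:(lra)) as [del [Hdel Hnear]].
  set (s' := Rmax c (s - del / 2)).
  assert (Hs' : c <= s' < s) by (unfold s'; split; [apply Rmax_l | apply Rmax_lub_lt; lra]).
  assert (Hclose : Rabs (s' - s) < del).
  { rewrite Rabs_left by lra. unfold s'. pose proof (Rmax_r c (s - del / 2)). lra. }
  pose proof (Rabs_def2 _ _ (Hnear s' Hclose)). pose proof (Hle s' Hs'). lra.
Qed.

Lemma neg_persists (q : R -> R) (s : R) : continuity_pt q s -> q s < 0 ->
  exists del, 0 < del /\ forall s', Rabs (s' - s) < del -> q s' < 0.
Proof.
  intros Hq Hneg. destruct (continuity_pt_eps q s Hq (- q s) ltac:(lra)) as [del [Hdel Hnear]].
  exists del. split; auto. intros s' Hs'. pose proof (Rabs_def2 _ _ (Hnear s' Hs')). lra.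
Qed.

Lemma real_induction (c d : R) (P : R -> Prop) : c <= d ->
  (forall s, c <= s <= d -> (forall s', c <= s' < s -> P s') -> P s) ->
  (forall s, c <= s < d -> (forall s', c <= s' <= s -> P s') ->
       exists del, 0 < del /\ forall s', s < s' < s + del -> P s') ->
  forall s, c <= s <= d -> P s.
Proof.
  intros Hcd Hleft Hright.
  set (E := fun s => c <= s <= d /\ forall s', c <= s' <= s -> P s').
  assert (Hc : E c).
  { split; [lra|]. intros s' Hs'. replace s' with c by lra. apply Hleft; intros; lra. }
  destruct (completeness E (ex_intro _ d (fun s Hs => proj2 (proj1 Hs))) (ex_intro _ c Hc))
    as [sg [Hub Hlub]].
  assert (Hsg1 : c <= sg) by (apply Hub; exact Hc).
  assert (Hsg2 : sg <= d) by (apply Hlub; intros s [Hs _]; lra).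
  assert (Hbelow : forall s', c <= s' < sg -> P s').
  { intros s' Hs'. apply NNPP; intro HP.
    assert (sg <= s'); [|lra]. apply Hlub. intros s [Hs HPs].
    destruct (Rle_or_lt s s'); auto. exfalso. apply HP, HPs. lra. }
  assert (Hsg : E sg).
  { split; [lra|]. intros s' Hs'. destruct (Rle_lt_or_eq_dec s' sg ltac:(lra)) as [Hlt| ->].
    - apply Hbelow; lra.
    - apply Hleft; [lra|]. intros; apply Hbelow; lra. }
  assert (sg = d) as <-; [|intros s Hs; apply Hsg; lra].
  destruct (Rle_lt_or_eq_dec sg d Hsg2) as [Hlt|]; auto. exfalso.
  destruct (Hright sg) as [del [Hdel HP]]; [lra | apply Hsg |].
  set (s1 := Rmin (sg + del/2) d).
  assert (Hs1 : E s1).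
  { unfold s1. split; [split; [apply Rmin_glb; lra | apply Rmin_r]|].
    intros s' Hs'. destruct (Rle_or_lt s' sg); [apply Hsg; lra|].
    apply HP. pose proof (Rmin_l (sg + del/2) d). lra. }
  pose proof (Hub s1 Hs1). unfold s1 in *.
  destruct (Rle_dec (sg + del/2) d); [rewrite Rmin_left in *|rewrite Rmin_right in *]; lra.
Qed.

Definition right_dini_le (h : R -> R) (s K : R) : Prop :=
  forall eps, 0 < eps -> exists del, 0 < del /\
    forall k, 0 < k < del -> h (s + k) - h s <= (K + eps) * k.
Definition right_dini_ge (h : R -> R) (s K : R) : Prop :=
  forall eps, 0 < eps -> exists del, 0 < del /\
    forall k, 0 < k < del -> (K - eps) * k <= h (s + k) - h s.

Lemma derivable_right_dini_ge (p : R -> R) s l : derivable_pt_lim p s l -> right_dini_ge p s l.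
Proof.
  intros H eps He. destruct (H eps He) as [d Hd]. exists d. split; [apply cond_pos|].
  intros k Hk. specialize (Hd k ltac:(lra) ltac:(rewrite Rabs_right; lra)).
  destruct (Rabs_def2 _ _ Hd) as [_ Hlow].
  assert (Hq : (l - eps) * k < (p (s + k) - p s) / k * k) by (apply Rmult_lt_compat_r; lra).
  unfold Rdiv in Hq. rewrite Rmult_assoc, Rinv_l in Hq by lra. lra.
Qed.

Lemma right_dini_le_weaken (h : R -> R) s K K' : K <= K' -> right_dini_le h s K -> right_dini_le h s K'.
Proof.
  intros HK H eps He. destruct (H eps He) as [del [Hdel Hk]]. exists del. split; auto.
  intros k Hk'. specialize (Hk k Hk'). nra.
Qed.

Lemma right_dini_sub (h1 h2 : R -> R) s K1 K2 : right_dini_le h1 s K1 -> right_dini_ge h2 s K2 ->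
  right_dini_le (fun r => h1 r - h2 r) s (K1 - K2).
Proof.
  intros H1 H2 eps He.
  destruct (H1 (eps/2) ltac:(lra)) as [d1 [Hd1 Hk1]]. destruct (H2 (eps/2) ltac:(lra)) as [d2 [Hd2 Hk2]].
  exists (Rmin d1 d2). split; [apply Rmin_glb_lt; auto|]. intros k Hk.
  pose proof (Rmin_l d1 d2). pose proof (Rmin_r d1 d2).
  specialize (Hk1 k ltac:(lra)). specialize (Hk2 k ltac:(lra)). lra.
Qed.

Lemma dini_mean_value (h : R -> R) (c d K : R) : c <= d ->
  (forall s, c <= s <= d -> continuity_pt h s) ->
  (forall s, c <= s < d -> right_dini_le h s K) ->
  h d - h c <= K * (d - c).
Proof.
  intros Hcd Hcont HD.
  assert (Hslack : forall eps, 0 < eps -> h d - h c <= (K + eps) * (d - c)).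
  { intros eps He.
    set (q := fun s => h s - (h c + (K + eps) * (s - c))).
    assert (Hq : forall s, c <= s <= d -> continuity_pt q s)
      by (intros s Hs; apply continuity_pt_minus; [apply Hcont, Hs | reg]).
    enough (q d <= 0) by (unfold q in *; lra).
    apply (real_induction c d (fun s => q s <= 0)); auto; [| |lra].
    - intros s Hs Hlt. destruct (Rle_lt_or_eq_dec c s (proj1 Hs)) as [Hcs|<-].
      + apply (nonpos_left_closed q c s Hcs (Hq s Hs) Hlt).
      + unfold q. lra.
    - intros s Hs Hle. destruct (HD s Hs eps He) as [del [Hdel Hk]].
      exists del. split; auto. intros s' Hs'.
      specialize (Hk (s' - s) ltac:(lra)). replace (s + (s' - s)) with s' in Hk by ring.
      specialize (Hle s ltac:(lra)). unfold q in *. nra. }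
  destruct (Rle_lt_or_eq_dec c d Hcd) as [Hlt|<-]; [|lra].
  apply Rnot_lt_le. intro Hgt.
  set (eps := (h d - h c - K * (d - c)) / (2 * (d - c))).
  assert (Heps : eps * (d - c) = (h d - h c - K * (d - c)) / 2) by (unfold eps; field; lra).
  assert (0 < eps) by (unfold eps; apply Rdiv_lt_0_compat; lra).
  pose proof (Hslack eps ltac:(lra)). nra.
Qed.

Lemma mul_le_of_le_div (L e c : R) : 0 <= L -> 0 < c -> 0 <= e -> e <= c / (L + 1) -> L * e <= c.
Proof.
  intros HL Hc He Hle. apply Rle_trans with ((L + 1) * e); [nra|].
  apply Rle_trans with ((L + 1) * (c / (L + 1))); [apply Rmult_le_compat_l; lra|].
  right. field. lra.
Qed.

Lemma positive_part_increment (e e' L M eps k : R) : 0 <= L -> 0 <= M -> 0 < k ->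
  L * k <= 1 -> 0 <= eps -> Rmax e 0 <= M ->
  e' <= e + (L * Rabs e + eps) * k -> Rmax e' 0 - Rmax e 0 <= (L * M + eps) * k.
Proof.
  intros HL HM Hk HLk He HeM Hstep.
  assert (HLMk : 0 <= L * M * k) by (repeat apply Rmult_le_pos; lra).
  unfold Rmax at 1. destruct (Rle_dec e' 0).
  - pose proof (Rmax_r e 0). nra.
  - destruct (Rle_dec e 0).
    + rewrite Rmax_right by lra. rewrite Rabs_left1 in Hstep by lra.
      assert (0 <= - e * (1 - L * k)) by (apply Rmult_le_pos; lra). nra.
    + rewrite Rmax_left in * by lra. rewrite Rabs_right in Hstep by lra.
      assert (L * e * k <= L * M * k) by (apply Rmult_le_compat_r; [lra | apply Rmult_le_compat_l; lra]).
      nra.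
Qed.

Lemma Rmax0_lipschitz (x y : R) : Rabs (Rmax x 0 - Rmax y 0) <= Rabs (x - y).
Proof. unfold Rmax. destruct (Rle_dec x 0), (Rle_dec y 0); split_Rabs; lra. Qed.

Lemma continuity_pt_excess (u p : R -> R) (s : R) : continuity_pt u s -> continuity_pt p s ->
  continuity_pt (fun t => Rmax (u t - p t) 0) s.
Proof.
  intros Hu Hp eps He.
  destruct (continuity_pt_minus u p s Hu Hp eps He) as [del [Hdel Hnear]].
  exists del. split; auto. intros t Ht. eapply Rle_lt_trans; [apply Rmax0_lipschitz|].
  apply (Hnear t Ht).
Qed.

Section Comparison.
Variables (u p : R -> R) (G : R -> R -> R) (c d : R).
Hypothesis Hu : forall s, c <= s <= d -> continuity_pt u s.
Hypothesis Hp : forall s, c <= s <= d -> continuity_pt p s.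
Hypothesis Hsub : forall s, c <= s < d -> right_dini_le u s (G s (u s)).
Hypothesis Hsuper : forall s, c <= s < d -> right_dini_ge p s (G s (p s)).
Hypothesis Hlip : forall s, c <= s < d -> exists r L, 0 < r /\ 0 <= L /\
  forall t z1 z2, s <= t < s + r -> Rabs (z1 - p s) < r -> Rabs (z2 - p s) < r ->
    Rabs (G t z1 - G t z2) <= L * Rabs (z1 - z2).

(** Where [u] touches [p] at [s], the excess [W = max (u - p) 0] vanishes on
    a short interval [[s, s + eta]] on which [G] is [L]-Lipschitz near
    [p s] with [L eta <= 1/2]: by the Dini mean value inequality the maximum
    [M] of [W] there satisfies [M <= L M eta <= M / 2]. *)
Lemma excess_vanishes s eta r L : c <= s -> s + eta <= d -> 0 < eta -> 0 <= L ->
  L * eta <= 1/2 -> u s = p s ->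
  (forall t, s <= t <= s + eta -> Rabs (u t - p s) < r /\ Rabs (p t - p s) < r) ->
  (forall t z1 z2, s <= t < s + eta -> Rabs (z1 - p s) < r -> Rabs (z2 - p s) < r ->
     Rabs (G t z1 - G t z2) <= L * Rabs (z1 - z2)) ->
  forall s', s <= s' <= s + eta -> u s' <= p s'.
Proof.
  intros Hcs Hsd Heta HL0 HLeta Heq Hnear HL.
  set (W := fun t => Rmax (u t - p t) 0).
  assert (HW : forall t, s <= t <= s + eta -> continuity_pt W t)
    by (intros t Ht; apply continuity_pt_excess; [apply Hu | apply Hp]; lra).
  destruct (continuity_ab_maj W s (s + eta) ltac:(lra) HW) as [Mx [HMx HMxr]].
  set (M := W Mx).
  assert (HM0 : 0 <= M) by apply Rmax_r.
  assert (Hdini : W Mx - W s <= (L * M) * (Mx - s)).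
  { apply dini_mean_value; [lra | intros; apply HW; lra|].
    intros t Ht eps He.
    destruct (Hnear t ltac:(lra)) as [Hut Hpt].
    pose proof (HL t (u t) (p t) ltac:(lra) Hut Hpt) as Hg.
    destruct (Hsub t ltac:(lra) (eps/2) ltac:(lra)) as [e1 [He1 Hk1]].
    destruct (Hsuper t ltac:(lra) (eps/2) ltac:(lra)) as [e2 [He2 Hk2]].
    exists (Rmin (Rmin e1 e2) (1 / (L + 1))). split.
    { repeat apply Rmin_glb_lt; auto. apply Rdiv_lt_0_compat; lra. }
    intros k Hk. pose proof (Rmin_l (Rmin e1 e2) (1 / (L + 1))).
    pose proof (Rmin_r (Rmin e1 e2) (1 / (L + 1))). pose proof (Rmin_l e1 e2). pose proof (Rmin_r e1 e2).
    specialize (Hk1 k ltac:(lra)). specialize (Hk2 k ltac:(lra)).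
    apply positive_part_increment; auto; try lra.
    - apply mul_le_of_le_div; lra.
    - apply HMx. lra.
    - pose proof (Rle_abs (G t (u t) - G t (p t))).
      assert ((G t (u t) - G t (p t)) * k <= L * Rabs (u t - p t) * k)
        by (apply Rmult_le_compat_r; lra).
      nra. }
  assert (HWs : W s = 0) by (unfold W; rewrite Heq, Rminus_diag; apply Rmax_right; lra).
  assert (HMle : M <= 0).
  { assert (L * M * (Mx - s) <= M * (L * eta)).
    { replace (M * (L * eta)) with (L * M * eta) by ring.
      apply Rmult_le_compat_l; [apply Rmult_le_pos|]; lra. }
    assert (M * (L * eta) <= M * (1/2)) by (apply Rmult_le_compat_l; lra).
    fold M in Hdini. lra. }
  intros s' Hs'. assert (W s' <= M) by (apply HMx; lra).
  pose proof (Rmax_l (u s' - p s') 0). unfold W in *. lra.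
Qed.

Lemma touching_step s : c <= s < d -> u s = p s ->
  exists eta, 0 < eta /\ forall s', s < s' < s + eta -> u s' <= p s'.
Proof.
  intros Hs Heq. destruct (Hlip s Hs) as [r [L [Hr [HL0 HL]]]].
  destruct (continuity_pt_eps u s (Hu s ltac:(lra)) r Hr) as [d1 [Hd1 Hnu]].
  destruct (continuity_pt_eps p s (Hp s ltac:(lra)) r Hr) as [d2 [Hd2 Hnp]].
  set (eta := Rmin (Rmin r (Rmin d1 d2)) (Rmin (1 / 2 / (L + 1)) (d - s)) / 2).
  assert (Heta : 0 < eta /\ eta < r /\ eta < d1 /\ eta < d2 /\ eta <= 1 / 2 / (L + 1) /\ eta < d - s).
  { unfold eta. pose proof (Rmin_l (Rmin r (Rmin d1 d2)) (Rmin (1 / 2 / (L + 1)) (d - s))).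
    pose proof (Rmin_r (Rmin r (Rmin d1 d2)) (Rmin (1 / 2 / (L + 1)) (d - s))).
    pose proof (Rmin_l r (Rmin d1 d2)). pose proof (Rmin_r r (Rmin d1 d2)).
    pose proof (Rmin_l d1 d2). pose proof (Rmin_r d1 d2).
    pose proof (Rmin_l (1 / 2 / (L + 1)) (d - s)). pose proof (Rmin_r (1 / 2 / (L + 1)) (d - s)).
    assert (0 < Rmin (Rmin r (Rmin d1 d2)) (Rmin (1 / 2 / (L + 1)) (d - s))).
    { repeat apply Rmin_glb_lt; try lra. repeat apply Rdiv_lt_0_compat; lra. }
    lra. }
  exists eta. split; [lra|]. intros s' Hs'.
  apply (excess_vanishes s eta r L); try lra.
  - apply mul_le_of_le_div; lra.
  - intros t Ht. rewrite <- Heq at 1. split; [apply Hnu | apply Hnp]; rewrite Rabs_right; lra.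
  - intros t z1 z2 Ht. apply HL. lra.
Qed.

(** The comparison principle, by real induction: [u <= p] passes to the
    limit from the left, persists to the right where strict, and is restored
    by [touching_step] where [u] touches [p]. *)
Theorem comparison : u c <= p c -> forall s, c <= s <= d -> u s <= p s.
Proof.
  intros H0 s Hs. assert (Hcd : c <= d) by lra. revert s Hs.
  apply (real_induction c d (fun s => u s <= p s)); auto.
  - intros s Hs Hlt. destruct (Rle_lt_or_eq_dec c s (proj1 Hs)) as [Hcs|<-]; auto.
    assert (u s - p s <= 0); [|lra].
    apply (nonpos_left_closed (fun t => u t - p t) c s Hcs);
      [apply continuity_pt_minus; [apply Hu | apply Hp]; lra|].
    intros s' Hs'. pose proof (Hlt s' Hs'). lra.
  - intros s Hs Hle. destruct (Rle_lt_or_eq_dec _ _ (Hle s ltac:(lra))) as [Hlt|Heq].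
    + destruct (neg_persists (fun t => u t - p t) s) as [del [Hdel Hneg]].
      * apply continuity_pt_minus; [apply Hu | apply Hp]; lra.
      * lra.
      * exists del. split; auto. intros s' Hs'.
        assert (u s' - p s' < 0); [apply Hneg; rewrite Rabs_right; lra | lra].
    + exact (touching_step s Hs Heq).
Qed.
End Comparison.

Section VectorAlgebra.
Context {X : Banach}.
Implicit Types x y z : X.
Notation V := (X_NormedModule X).

Lemma bnorm_zero : bnorm (@bzero X) = 0.
Proof. exact (@norm_zero R_AbsRing V). Qed.

Lemma bsub_self x : bsub x x = bzero.
Proof. apply badd_opp. Qed.

Lemma bsub_zero_r x : bsub x bzero = x.
Proof. exact (@minus_zero_r V x). Qed.

Lemma bsub_add_l z x y : bsub (badd z x) (badd z y) = bsub x y.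
Proof.
  change (@minus V (plus (z : V) x) (plus (z : V) y) = minus (x : V) y).
  unfold minus. rewrite (@opp_plus V), ((@plus_comm V) z x), <- (@plus_assoc V). f_equal.
  rewrite (@plus_assoc V), (@plus_opp_r V). apply (@plus_zero_l V).
Qed.

Lemma bsub_add_cancel z w : bsub (badd z w) z = w.
Proof. rewrite <- (badd_zero z) at 2. rewrite bsub_add_l. apply bsub_zero_r. Qed.

Lemma bsub_sub_sub x y z : bsub (bsub x z) (bsub y z) = bsub x y.
Proof.
  change (@minus V (minus (x : V) z) (minus (y : V) z) = minus (x : V) y).
  unfold minus. rewrite (@opp_plus V), (@opp_opp V), <- (@plus_assoc V). f_equal.
  rewrite (@plus_comm V), <- (@plus_assoc V), (@plus_opp_r V). apply (@plus_zero_r V).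
Qed.

Lemma bscal_sub c x y : bscal c (bsub x y) = bsub (bscal c x) (bscal c y).
Proof. exact (@scal_minus_distr_l R_Ring V c x y). Qed.

Lemma bsub_eq0 x y : bsub x y = bzero -> x = y.
Proof.
  intro H. change (@minus V x y = zero) in H. change (x = y :> V).
  apply (@plus_reg_r V) with (opp y). rewrite (@plus_opp_r V). exact H.
Qed.

Lemma bnorm_le_sub x y : bnorm x <= bnorm (bsub x y) + bnorm y.
Proof. pose proof (bnorm_sub_triangle x y bzero). rewrite !bsub_zero_r in H. exact H. Qed.

Lemma bnorm_reverse_triangle x y : Rabs (bnorm x - bnorm y) <= bnorm (bsub x y).
Proof.
  pose proof (bnorm_le_sub x y). pose proof (bnorm_le_sub y x).
  rewrite bnorm_sub_sym in H0. split_Rabs; lra.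
Qed.

End VectorAlgebra.

Section Curves.
(** Curves [R -> X]: a first-order (little-o) form [dif] of the derivative,
    equivalent to [has_deriv] but also meaningful at [s = t]. *)
Context {X : Banach}.

Definition dif (phi : R -> X) (t : R) (v : X) : Prop :=
  forall eps, 0 < eps -> exists del, 0 < del /\ forall s, Rabs (s - t) < del ->
    bnorm (bsub (bsub (phi s) (phi t)) (bscal (s - t) v)) <= eps * Rabs (s - t).

Definition curve_continuous (phi : R -> X) (t : R) : Prop :=
  forall eps, 0 < eps -> exists del, 0 < del /\ forall s, Rabs (s - t) < del ->
    bnorm (bsub (phi s) (phi t)) < eps.

Lemma quotient_remainder (phi : R -> X) t v h : h <> 0 ->
  bnorm (bsub (bscal (/ h) (bsub (phi (t + h)) (phi t))) v) =
  / Rabs h * bnorm (bsub (bsub (phi (t + h)) (phi t)) (bscal h v)).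
Proof.
  intro Hh. rewrite <- Rabs_inv, <- bnorm_scal. f_equal.
  rewrite (bscal_sub (/ h) (bsub _ _) (bscal h v)), bscal_assoc, Rinv_l, bscal_one by exact Hh.
  reflexivity.
Qed.

Lemma has_deriv_dif (phi : R -> X) t v : has_deriv phi t v -> dif phi t v.
Proof.
  intros H eps He. destruct (H eps He) as [del [Hd Hh]]. exists del. split; auto.
  intros s Hs. destruct (Req_dec s t) as [->|Hne].
  - rewrite bsub_self, Rminus_diag, bscal_zero, bsub_self, bnorm_zero, Rabs_R0. lra.
  - specialize (Hh (s - t) ltac:(lra) Hs).
    rewrite quotient_remainder in Hh by lra. replace (t + (s - t)) with s in Hh by ring.
    assert (Habs : 0 < Rabs (s - t)) by (apply Rabs_pos_lt; lra).
    apply Rmult_lt_compat_l with (r := Rabs (s - t)) in Hh; [|exact Habs].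
    rewrite <- Rmult_assoc, Rinv_r, Rmult_1_l in Hh by lra. lra.
Qed.

Lemma dif_has_deriv (phi : R -> X) t v : dif phi t v -> has_deriv phi t v.
Proof.
  intros H eps He. destruct (H (eps/2) ltac:(lra)) as [del [Hd Hh]]. exists del. split; auto.
  intros h Hh0 Hhd. specialize (Hh (t + h) ltac:(replace (t + h - t) with h by ring; auto)).
  replace (t + h - t) with h in Hh by ring.
  rewrite quotient_remainder by exact Hh0.
  assert (Habs : 0 < Rabs h) by (apply Rabs_pos_lt; auto).
  apply Rle_lt_trans with (/ Rabs h * (eps / 2 * Rabs h)).
  - apply Rmult_le_compat_l; [left; apply Rinv_0_lt_compat|]; auto.
  - replace (/ Rabs h * (eps / 2 * Rabs h)) with (eps / 2) by (field; lra). lra.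
Qed.

Lemma dif_continuous (phi : R -> X) t v : dif phi t v -> curve_continuous phi t.
Proof.
  intros H eps He. destruct (H 1 ltac:(lra)) as [del [Hd Hh]].
  set (m := 1 + bnorm v).
  assert (Hm : 0 < m) by (unfold m; pose proof (bnorm_nonneg v); lra).
  exists (Rmin del (eps / (2 * m))). split; [apply Rmin_glb_lt; auto; apply Rdiv_lt_0_compat; lra|].
  intros s Hs. pose proof (Rmin_l del (eps / (2 * m))). pose proof (Rmin_r del (eps / (2 * m))).
  specialize (Hh s ltac:(lra)).
  pose proof (bnorm_le_sub (bsub (phi s) (phi t)) (bscal (s - t) v)) as Htri.
  rewrite bnorm_scal in Htri.
  assert (Rabs (s - t) * m < eps).
  { apply Rle_lt_trans with (eps / (2 * m) * m); [apply Rmult_le_compat_r; lra|].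
    replace (eps / (2 * m) * m) with (eps / 2) by (field; lra). lra. }
  unfold m in *. pose proof (Rabs_pos (s - t)). nra.
Qed.

Lemma continuity_pt_norm_sub (phi : R -> X) (w : X) t : curve_continuous phi t ->
  continuity_pt (fun s => bnorm (bsub (phi s) w)) t.
Proof.
  intros H eps He. destruct (H eps He) as [del [Hd Hh]]. exists del. split; auto.
  intros s [_ Hs]. simpl. unfold R_dist. eapply Rle_lt_trans; [apply bnorm_reverse_triangle|].
  rewrite bsub_sub_sub. apply Hh, Hs.
Qed.

Lemma dif_right_dini_norm (phi : R -> X) (w : X) s v : dif phi s v ->
  right_dini_le (fun r => bnorm (bsub (phi r) w)) s (bnorm v).
Proof.
  intros H eps He. destruct (H eps He) as [d [Hd Hrem]]. exists d. split; auto. intros k Hk.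
  specialize (Hrem (s + k)). replace (s + k - s) with k in Hrem by ring.
  rewrite Rabs_right in Hrem by lra. specialize (Hrem ltac:(lra)).
  pose proof (bnorm_le_sub (bsub (phi (s + k)) (phi s)) (bscal k v)) as Htri.
  rewrite bnorm_scal, Rabs_right in Htri by lra.
  pose proof (bnorm_reverse_triangle (bsub (phi (s + k)) w) (bsub (phi s) w)) as Hrev.
  rewrite bsub_sub_sub in Hrev. pose proof (Rle_abs (bnorm (bsub (phi (s + k)) w) - bnorm (bsub (phi s) w))).
  lra.
Qed.

Lemma dif_local (A C : R -> X) t v eta : 0 < eta ->
  (forall s, Rabs (s - t) < eta -> C s = A s) -> dif A t v -> dif C t v.
Proof.
  intros Heta HC HA eps He. destruct (HA eps He) as [d1 [Hd1 H1]].
  exists (Rmin d1 eta). split; [apply Rmin_glb_lt; auto|]. intros s Hs.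
  pose proof (Rmin_l d1 eta). pose proof (Rmin_r d1 eta).
  rewrite !HC by (rewrite ?Rminus_diag, ?Rabs_R0; lra). apply H1. lra.
Qed.

Lemma dif_glue (A B C : R -> X) t v :
  (forall s, s <= t -> C s = A s) -> (forall s, t < s -> C s = B s) -> A t = B t ->
  dif A t v -> dif B t v -> dif C t v.
Proof.
  intros HCA HCB HAB HA HB eps He.
  destruct (HA eps He) as [d1 [Hd1 H1]]. destruct (HB eps He) as [d2 [Hd2 H2]].
  exists (Rmin d1 d2). split; [apply Rmin_glb_lt; auto|]. intros s Hs.
  pose proof (Rmin_l d1 d2). pose proof (Rmin_r d1 d2).
  rewrite (HCA t) by lra. destruct (Rle_or_lt s t).
  - rewrite HCA by auto. apply H1. lra.
  - rewrite HCB, HAB by auto. apply H2. lra.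
Qed.

Lemma is_derive_dif (G : R -> X) t v : @is_derive R_AbsRing (X_NormedModule X) G t v -> dif G t v.
Proof.
  intros [_ Hd] eps He. destruct (Hd t (fun P H => H) (mkposreal eps He)) as [del Hdel].
  exists del. split; [apply cond_pos|]. intros s Hs. apply (Hdel s). exact Hs.
Qed.

End Curves.

Lemma le_geometric (a b C : R) : 0 <= C -> (forall n, a <= b + C / 2 ^ n) -> a <= b.
Proof.
  intros HC H. apply le_epsilon. intros eps He.
  destruct (Rle_lt_or_eq_dec _ _ HC) as [HCpos| <-].
  - destruct (inv_pow2_small (eps / C) ltac:(apply Rdiv_lt_0_compat; auto)) as [n Hn].
    specialize (H n). assert (C / 2 ^ n <= eps); [|lra].
    apply Rmult_lt_compat_l with (r := C) in Hn; auto.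
    replace (C * (eps / C)) with eps in Hn by (field; lra). unfold Rdiv. lra.
  - specialize (H O). unfold Rdiv in H. rewrite Rmult_0_l in H. lra.
Qed.

Lemma inv_pow2_pos n : 0 < / 2 ^ n.
Proof. apply Rinv_0_lt_compat, pow_lt; lra. Qed.

Section Picard.
(** Time is clamped to [[tau - del, tau + del]]
    so that every iterate is a globally defined curve. *)
Context {X : Banach}.
Notation CX := (X_CompleteNormedModule X).
Variable f : R -> X -> X.
Variables tau del r M L : R.
Variable z0 : X.
Hypothesis Hdel : 0 < del.
Hypothesis Hr : 0 < r.
Hypothesis HM : 0 <= M.
Hypothesis HL : 0 <= L.
Hypothesis HMd : M * del <= r.
Hypothesis HLd : L * del <= 1/2.

Definition box (t : R) (z : X) := Rabs (t - tau) <= del /\ bnorm (bsub z z0) <= r.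

Hypothesis Hbound : forall t z, box t z -> bnorm (f t z) <= M.
Hypothesis Hlip : forall t z1 z2, box t z1 -> box t z2 ->
  bnorm (bsub (f t z1) (f t z2)) <= L * bnorm (bsub z1 z2).
Hypothesis Hcont : forall t z, box t z -> forall eps, 0 < eps -> exists eta, 0 < eta /\
  forall s w, box s w -> Rabs (s - t) < eta -> bnorm (bsub w z) < eta ->
    bnorm (bsub (f s w) (f t z)) < eps.

Definition clamp (s : R) := Rmax (tau - del) (Rmin (tau + del) s).

Lemma clamp_in s : Rabs (clamp s - tau) <= del.
Proof. unfold clamp, Rmax, Rmin. repeat destruct Rle_dec; split_Rabs; lra. Qed.

Lemma clamp_lipschitz s s' : Rabs (clamp s - clamp s') <= Rabs (s - s').
Proof. unfold clamp, Rmax, Rmin. repeat destruct Rle_dec; split_Rabs; lra. Qed.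

Lemma clamp_id s : Rabs (s - tau) <= del -> clamp s = s.
Proof. unfold clamp, Rmax, Rmin. repeat destruct Rle_dec; split_Rabs; lra. Qed.

(** The invariant set of the iteration: curves staying in the ball and
    [M]-Lipschitz in time. *)
Definition admissible (W : R -> X) := (forall t, bnorm (bsub (W t) z0) <= r) /\
  (forall t t', bnorm (bsub (W t) (W t')) <= M * Rabs (t - t')).

Definition field_along (W : R -> X) (s : R) : X := f (clamp s) (W (clamp s)).

Lemma field_along_bound W : admissible W -> forall s, bnorm (field_along W s) <= M.
Proof. intros [HW _] s. apply Hbound. split; [apply clamp_in | apply HW]. Qed.

Lemma field_along_continuous W : admissible W ->
  forall s, @continuous R_UniformSpace (X_UniformSpace X) (field_along W) s.
Proof.
  intros [Hball HLipW] s. apply filterlim_locally. intro eps.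
  destruct (Hcont (clamp s) (W (clamp s)) (conj (clamp_in s) (Hball _)) eps (cond_pos eps))
    as [eta [Heta Hc]].
  assert (Hsmall : 0 < eta / (M + 1) <= eta).
  { split; [apply Rdiv_lt_0_compat; lra|].
    apply Rmult_le_reg_r with (M + 1); [lra|]. unfold Rdiv.
    rewrite Rmult_assoc, Rinv_l by lra. nra. }
  exists (mkposreal _ (proj1 Hsmall)). intros s' Hs'. simpl in Hs'. unfold ball in Hs'. simpl in Hs'.
  unfold AbsRing_ball, abs, minus, plus, opp in Hs'. simpl in Hs'.
  assert (Hcl : Rabs (clamp s' - clamp s) < eta / (M + 1))
    by (eapply Rle_lt_trans; [apply clamp_lipschitz | exact Hs']).
  apply Hc; [split; [apply clamp_in | apply Hball] | lra |].
  eapply Rle_lt_trans; [apply HLipW|].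
  apply Rle_lt_trans with (M * (eta / (M + 1))); [apply Rmult_le_compat_l; lra|].
  apply Rmult_lt_reg_r with (M + 1); [lra|]. unfold Rdiv.
  replace (M * (eta * / (M + 1)) * (M + 1)) with (M * eta) by (field; lra). nra.
Qed.

Lemma field_along_integrable W : admissible W -> forall a c, ex_RInt (V := CX) (field_along W) a c.
Proof. intros HW a c. apply ex_RInt_continuous. intros z _. apply (field_along_continuous W HW). Qed.

Notation I W a c := (RInt (V := CX) (field_along W) a c).

Lemma integral_bound W a c : admissible W -> bnorm (I W a c) <= Rabs (c - a) * M.
Proof.
  intro HW. apply (norm_RInt_le_const_abs (V := CX) (field_along W) a c).
  - intros; apply (field_along_bound W HW).
  - apply RInt_correct, (field_along_integrable W HW).
Qed.

Lemma integral_sub W a c : admissible W -> bsub (I W tau a) (I W tau c) = I W c a.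
Proof.
  intro HW. rewrite <- (RInt_Chasles (V := CX) (field_along W) tau c a)
    by apply (field_along_integrable W HW).
  change (@minus (X_NormedModule X) (plus (I W tau c) (I W c a)) (I W tau c) = I W c a).
  unfold minus. rewrite (@plus_comm (X_NormedModule X)), (@plus_assoc (X_NormedModule X)),
    (@plus_opp_l (X_NormedModule X)).
  apply (@plus_zero_l (X_NormedModule X)).
Qed.

Definition picard_op (W : R -> X) (t : R) : X := badd z0 (I W tau (clamp t)).

Lemma picard_op_admissible W : admissible W -> admissible (picard_op W).
Proof.
  intro HW. split.
  - intro t. unfold picard_op. rewrite bsub_add_cancel.
    eapply Rle_trans; [apply integral_bound; auto|].
    apply Rle_trans with (del * M); [apply Rmult_le_compat_r; auto; apply clamp_in | lra].
  - intros t t'. unfold picard_op. rewrite bsub_add_l, integral_sub by auto.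
    eapply Rle_trans; [apply integral_bound; auto|]. rewrite Rmult_comm.
    apply Rmult_le_compat_l; auto. apply clamp_lipschitz.
Qed.

Lemma picard_op_contraction W1 W2 D : admissible W1 -> admissible W2 ->
  (forall t, bnorm (bsub (W1 t) (W2 t)) <= D) ->
  forall t, bnorm (bsub (picard_op W1 t) (picard_op W2 t)) <= L * del * D.
Proof.
  intros H1 H2 HD t. unfold picard_op. rewrite bsub_add_l.
  replace (bsub (I W1 tau (clamp t)) (I W2 tau (clamp t)))
    with (RInt (V := CX) (fun s => bsub (field_along W1 s) (field_along W2 s)) tau (clamp t))
    by (apply (RInt_minus (V := CX)); apply field_along_integrable; auto).
  eapply Rle_trans.
  - apply (norm_RInt_le_const_abs (V := CX) (fun s => bsub (field_along W1 s) (field_along W2 s))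
             tau (clamp t) _ (L * D)).
    + intros s _. unfold field_along.
      apply Rle_trans with (L * bnorm (bsub (W1 (clamp s)) (W2 (clamp s)))).
      * apply Hlip; split; try apply clamp_in; [apply (proj1 H1) | apply (proj1 H2)].
      * apply Rmult_le_compat_l; auto.
    + apply RInt_correct, (ex_RInt_minus (V := CX)); apply field_along_integrable; auto.
  - assert (0 <= D) by (eapply Rle_trans; [apply (bnorm_nonneg (bsub (W1 0) (W2 0))) | apply HD]).
    replace (L * del * D) with (del * (L * D)) by ring.
    apply Rmult_le_compat_r; [apply Rmult_le_pos; auto | apply clamp_in].
Qed.

Fixpoint iterate (n : nat) : R -> X :=
  match n with O => fun _ => z0 | S k => picard_op (iterate k) end.

Lemma iterate_admissible n : admissible (iterate n).
Proof.
  induction n as [|n IH]; [|apply picard_op_admissible, IH].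
  split; intros; simpl; rewrite bsub_self, bnorm_zero; [lra|].
  apply Rmult_le_pos; auto. apply Rabs_pos.
Qed.

Lemma iterate_step n t : bnorm (bsub (iterate (S n) t) (iterate n t)) <= r / 2 ^ n.
Proof.
  revert t. induction n as [|n IH]; intro t.
  - simpl. replace (r / 1) with r by field. apply (proj1 (iterate_admissible 1)).
  - change (bnorm (bsub (picard_op (iterate (S n)) t) (picard_op (iterate n) t)) <= r / 2 ^ S n).
    apply Rle_trans with (L * del * (r / 2 ^ n)).
    + apply picard_op_contraction; [apply iterate_admissible | apply iterate_admissible | apply IH].
    + simpl pow. unfold Rdiv. rewrite Rinv_mult. pose proof (inv_pow2_pos n).
      assert (0 <= r * / 2 ^ n) by nra. nra.
Qed.

Lemma iterate_cauchy n k t :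
  bnorm (bsub (iterate (n + k) t) (iterate n t)) <= 2 * r * (/ 2 ^ n - / 2 ^ (n + k)).
Proof.
  induction k as [|k IH].
  - rewrite Nat.add_0_r, bsub_self, bnorm_zero. lra.
  - eapply Rle_trans; [apply (bnorm_sub_triangle _ (iterate (n + k) t))|].
    rewrite Nat.add_succ_r. pose proof (iterate_step (n + k) t).
    simpl pow. unfold Rdiv in *. rewrite Rinv_mult. lra.
Qed.

Lemma iterate_limit t : exists l, forall n, bnorm (bsub (iterate n t) l) <= 2 * r / 2 ^ n.
Proof.
  assert (Hfar : forall n m, (n <= m)%nat ->
            bnorm (bsub (iterate m t) (iterate n t)) <= 2 * r * / 2 ^ n).
  { intros n m Hnm. replace m with (n + (m - n))%nat by lia.
    eapply Rle_trans; [apply iterate_cauchy|]. pose proof (inv_pow2_pos (n + (m - n))). nra. }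
  destruct (bcomplete (fun n => iterate n t)) as [l Hl].
  - intros eps He. destruct (inv_pow2_small (eps / (4 * r)) ltac:(apply Rdiv_lt_0_compat; lra))
      as [N HN].
    apply Rmult_lt_compat_l with (r := 4 * r) in HN; [|lra].
    replace (4 * r * (eps / (4 * r))) with eps in HN by (field; lra).
    exists N. intros m n Hm Hn. pose proof (Hfar N m Hm). pose proof (Hfar N n Hn).
    pose proof (bnorm_sub_triangle (iterate m t) (iterate N t) (iterate n t)) as Htri.
    rewrite (bnorm_sub_sym (iterate N t)) in Htri. unfold bsub in *. lra.
  - exists l. intro n. apply le_epsilon. intros eps He. destruct (Hl eps He) as [N HN].
    pose proof (HN (max N n) (Nat.le_max_l _ _)). pose proof (Hfar n (max N n) (Nat.le_max_r _ _)).
    pose proof (bnorm_sub_triangle (iterate n t) (iterate (max N n) t) l) as Htri.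
    rewrite (bnorm_sub_sym (iterate n t) (iterate (max N n) t)) in Htri. unfold bsub, Rdiv in *. lra.
Qed.

(** The uniform limit of the iterates is a fixed point of the Picard
    operator, hence a solution on [(tau - del, tau + del)] by the
    fundamental theorem of calculus. *)
Theorem picard : exists Y : R -> X, Y tau = z0 /\
  forall t, Rabs (t - tau) < del -> bnorm (bsub (Y t) z0) <= r /\ has_deriv Y t (f t (Y t)).
Proof.
  destruct (choice _ iterate_limit) as [Y HY].
  assert (HYadm : admissible Y).
  { split.
    - intro t. apply (le_geometric _ _ (2 * r)); [lra|]. intro n.
      pose proof (bnorm_sub_triangle (Y t) (iterate n t) z0) as Htri. pose proof (HY t n).
      pose proof (proj1 (iterate_admissible n) t).
      rewrite (bnorm_sub_sym (Y t) (iterate n t)) in Htri. lra.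
    - intros t t'. apply (le_geometric _ _ (4 * r)); [lra|]. intro n.
      pose proof (bnorm_sub_triangle (Y t) (iterate n t) (Y t')) as Htri.
      pose proof (bnorm_sub_triangle (iterate n t) (iterate n t') (Y t')).
      pose proof (HY t n). pose proof (HY t' n). pose proof (proj2 (iterate_admissible n) t t').
      rewrite (bnorm_sub_sym (Y t) (iterate n t)) in Htri. unfold Rdiv in *. lra. }
  assert (Hfix : forall t, Y t = picard_op Y t).
  { intro t. apply bsub_eq0, bnorm_eq0, Rle_antisym; [|apply bnorm_nonneg].
    apply (le_geometric _ _ (2 * r)); [lra|]. intro n.
    pose proof (bnorm_sub_triangle (Y t) (iterate (S n) t) (picard_op Y t)) as Htri.
    pose proof (HY t (S n)).
    pose proof (picard_op_contraction (iterate n) Y _ (iterate_admissible n) HYadm (fun t => HY t n) t).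
    assert (L * del * (2 * r / 2 ^ n) <= 1/2 * (2 * r / 2 ^ n)).
    { apply Rmult_le_compat_r; [|lra]. unfold Rdiv. pose proof (inv_pow2_pos n). nra. }
    simpl pow in *. rewrite (bnorm_sub_sym (Y t) (iterate (S n) t)) in Htri. unfold Rdiv in *. rewrite Rinv_mult in *.
    simpl iterate in *. lra. }
  exists Y. split.
  - rewrite Hfix. unfold picard_op. rewrite clamp_id by (rewrite Rminus_diag, Rabs_R0; lra).
    rewrite RInt_point. apply badd_zero.
  - intros t Ht. split; [apply (proj1 HYadm)|].
    replace (f t (Y t)) with (field_along Y t) by (unfold field_along; rewrite clamp_id by lra; reflexivity).
    apply dif_has_deriv.
    apply (dif_local (fun s => badd z0 (I Y tau s)) Y t _ (del - Rabs (t - tau))); [lra| |].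
    + intros s Hs. rewrite Hfix. unfold picard_op. rewrite clamp_id; [reflexivity|].
      pose proof (Rabs_triang (s - t) (t - tau)).
      replace (s - t + (t - tau)) with (s - tau) in H by ring. lra.
    + intros eps He. destruct (is_derive_dif (fun s => I Y tau s) t (field_along Y t)
          (is_derive_RInt (V := CX) (field_along Y) (fun s => I Y tau s) tau t
             (filter_forall _ (fun c => RInt_correct _ _ _ (field_along_integrable Y HYadm _ _)))
             (field_along_continuous Y HYadm t)) eps He) as [d [Hd Hrem]].
      exists d. split; auto. intros s Hs. rewrite bsub_add_l. apply Hrem, Hs.
Qed.
End Picard.

Section LocalTheory.
Context {X : Banach}.

Lemma Omega_open T b t0 (y0 : X) : Omega T b t0 y0 ->
  exists rho, 0 < rho /\ forall t z, Rabs (t - t0) < rho -> bnorm (bsub z y0) < rho -> Omega T b t z.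
Proof.
  intros [HT Hb].
  assert (Hz : forall z : X, bnorm (bsub z y0) < b - bnorm y0 -> bnorm z < b)
    by (intros z Hz; pose proof (bnorm_le_sub z y0); lra).
  destruct T as [T|].
  - exists (Rmin (b - bnorm y0) (T - Rabs t0)). simpl in HT.
    split; [apply Rmin_glb_lt; lra|]. intros t z Ht Hz'.
    pose proof (Rmin_l (b - bnorm y0) (T - Rabs t0)). pose proof (Rmin_r (b - bnorm y0) (T - Rabs t0)).
    split; [simpl; split_Rabs; lra | apply Hz; lra].
  - exists (b - bnorm y0). split; [lra|]. intros t z _ Hz'. split; [exact I | auto].
Qed.

Lemma compact_union (K1 K2 : R -> X -> Prop) : compact_RX K1 -> compact_RX K2 ->
  compact_RX (fun t y => K1 t y \/ K2 t y).
Proof.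
  intros H1 H2 I U HU Hcov.
  destruct (H1 I U HU (fun t y H => Hcov t y (or_introl H))) as [l1 Hl1].
  destruct (H2 I U HU (fun t y H => Hcov t y (or_intror H))) as [l2 Hl2].
  exists (l1 ++ l2). intros t y [Hy|Hy].
  - destruct (Hl1 t y Hy) as [i [Hi HUi]]. exists i. split; [apply in_or_app; left|]; auto.
  - destruct (Hl2 t y Hy) as [i [Hi HUi]]. exists i. split; [apply in_or_app; right|]; auto.
Qed.

Lemma compact_convergent_sequence (t0 : R) (y0 : X) (ts : nat -> R) (ys : nat -> X) :
  (forall eps, 0 < eps -> exists N, forall n, (N <= n)%nat ->
     Rabs (ts n - t0) < eps /\ bnorm (bsub (ys n) y0) < eps) ->
  compact_RX (fun t y => (t = t0 /\ y = y0) \/ exists n, t = ts n /\ y = ys n).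
Proof.
  intros Hconv I U HU Hcov.
  destruct (Hcov t0 y0 (or_introl (conj eq_refl eq_refl))) as [i0 Hi0].
  destruct (HU i0 t0 y0 Hi0) as [rr [Hrr Hball]].
  destruct (Hconv rr Hrr) as [N HN].
  destruct (choice (fun n i => U i (ts n) (ys n))
              (fun n => Hcov _ _ (or_intror (ex_intro _ n (conj eq_refl eq_refl)))))
    as [idx Hidx].
  exists (i0 :: map idx (seq 0 N)). intros t y [[-> ->]|[n [-> ->]]].
  - exists i0. split; [left|]; auto.
  - destruct (le_lt_dec N n) as [HnN|HnN].
    + exists i0. split; [left; auto|]. destruct (HN n HnN). apply Hball; auto.
    + exists (idx n). split; [right; apply in_map, in_seq; lia | apply Hidx].
Qed.

(** Under (LC), [f] is Lipschitz in [y] on a neighbourhood of each point of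
    [Omega]: otherwise two sequences of bad pairs converging to the point
    would form a compact set with no Lipschitz constant. *)
Lemma LC_locally_lipschitz T b (f : R -> X -> X) : hyp_LC T b f ->
  forall t0 y0, Omega T b t0 y0 -> exists rho Lc, 0 < rho /\ 0 <= Lc /\
    forall t z1 z2, Rabs (t - t0) < rho -> bnorm (bsub z1 y0) < rho -> bnorm (bsub z2 y0) < rho ->
      bnorm (bsub (f t z1) (f t z2)) <= Lc * bnorm (bsub z1 z2).
Proof.
  intros [_ HLC] t0 y0 HO. destruct (Omega_open T b t0 y0 HO) as [rho0 [Hr0 HOm]].
  apply NNPP. intro Hno.
  destruct (vanishing_radii rho0 Hr0) as [rn [Hrn Hrn_small]].
  assert (Hbad : forall n : nat, exists p : R * X * X,
     Rabs (fst (fst p) - t0) < rn n /\ bnorm (bsub (snd (fst p)) y0) < rn n /\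
     bnorm (bsub (snd p) y0) < rn n /\
     INR n * bnorm (bsub (snd (fst p)) (snd p)) <
       bnorm (bsub (f (fst (fst p)) (snd (fst p))) (f (fst (fst p)) (snd p)))).
  { intro n. apply NNPP. intro Hn. apply Hno. exists (rn n), (INR n).
    split; [apply Hrn|]. split; [apply pos_INR|].
    intros t z1 z2 H1 H2 H3. apply Rnot_lt_le. intro H4. apply Hn. exists (t, z1, z2). auto. }
  destruct (choice _ Hbad) as [p Hp].
  set (ts := fun n => fst (fst (p n))).
  set (K1 := fun t y => (t = t0 /\ y = y0) \/ exists n, t = ts n /\ y = snd (fst (p n))).
  set (K2 := fun t y => (t = t0 /\ y = y0) \/ exists n, t = ts n /\ y = snd (p n)).
  assert (Hconv : forall ys : nat -> X, (forall n, bnorm (bsub (ys n) y0) < rn n) ->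
     forall eps, 0 < eps -> exists N, forall n, (N <= n)%nat ->
       Rabs (ts n - t0) < eps /\ bnorm (bsub (ys n) y0) < eps).
  { intros ys Hys eps He. destruct (Hrn_small eps He) as [N HN]. exists N. intros n Hn.
    specialize (HN n Hn). destruct (Hp n) as [Ht _]. specialize (Hys n). unfold ts. lra. }
  assert (HK : compact_RX (fun t y => K1 t y \/ K2 t y)).
  { apply compact_union; apply compact_convergent_sequence, Hconv; intro n; apply (Hp n). }
  destruct (HLC _ HK) as [C [HC HCl]].
  { intros t y [[[-> ->]|[n [-> ->]]]|[[-> ->]|[n [-> ->]]]]; auto;
      destruct (Hp n) as [H1 [H2 [H3 _]]]; destruct (Hrn n); apply HOm; unfold ts; lra. }
  destruct (INR_unbounded C) as [n Hn]. destruct (Hp n) as [_ [_ [_ Hviol]]].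
  pose proof (HCl (ts n) (snd (fst (p n))) (snd (p n))
                (or_introl (or_intror (ex_intro _ n (conj eq_refl eq_refl))))
                (or_intror (or_intror (ex_intro _ n (conj eq_refl eq_refl))))).
  pose proof (bnorm_nonneg (bsub (snd (fst (p n))) (snd (p n)))). unfold ts in *. nra.
Qed.

Theorem uniform_local_existence T b (f : R -> X -> X) : hyp_LC T b f ->
  forall t1 y, Omega T b t1 y -> exists rho del, 0 < rho /\ 0 < del /\
    forall tau z0, Rabs (tau - t1) < rho -> bnorm (bsub z0 y) < rho ->
      exists Y : R -> X, Y tau = z0 /\ forall t, Rabs (t - tau) < del ->
        Omega T b t (Y t) /\ has_deriv Y t (f t (Y t)).
Proof.
  intros HLC t1 y HOy. pose proof HLC as [Hfc _].
  destruct (Omega_open T b t1 y HOy) as [rho1 [Hr1 HO1]].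
  destruct (Hfc t1 y HOy 1 ltac:(lra)) as [rho2 [Hr2 HO2]].
  destruct (LC_locally_lipschitz T b f HLC t1 y HOy) as [rho3 [Lc [Hr3 [HLc HO3]]]].
  set (R0 := Rmin (Rmin rho1 rho2) rho3).
  assert (HR0 : 0 < R0 /\ R0 <= rho1 /\ R0 <= rho2 /\ R0 <= rho3).
  { unfold R0. pose proof (Rmin_l (Rmin rho1 rho2) rho3). pose proof (Rmin_r (Rmin rho1 rho2) rho3).
    pose proof (Rmin_l rho1 rho2). pose proof (Rmin_r rho1 rho2).
    repeat split; try lra. repeat apply Rmin_glb_lt; lra. }
  set (M := bnorm (f t1 y) + 1).
  assert (HM : 0 < M) by (unfold M; pose proof (bnorm_nonneg (f t1 y)); lra).
  set (r := R0 / 2).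
  set (del := Rmin (R0 / 4) (Rmin (r / (M + 1)) (1 / 2 / (Lc + 1)))).
  assert (Hdel : 0 < del /\ del <= R0 / 4 /\ del <= r / (M + 1) /\ del <= 1 / 2 / (Lc + 1)).
  { unfold del. pose proof (Rmin_l (R0 / 4) (Rmin (r / (M + 1)) (1 / 2 / (Lc + 1)))).
    pose proof (Rmin_r (R0 / 4) (Rmin (r / (M + 1)) (1 / 2 / (Lc + 1)))).
    pose proof (Rmin_l (r / (M + 1)) (1 / 2 / (Lc + 1))).
    pose proof (Rmin_r (r / (M + 1)) (1 / 2 / (Lc + 1))).
    repeat split; try lra. unfold r. repeat apply Rmin_glb_lt; repeat apply Rdiv_lt_0_compat; lra. }
  assert (HMd : M * del <= r) by (apply mul_le_of_le_div; unfold r in *; lra).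
  assert (HLd : Lc * del <= 1 / 2) by (apply mul_le_of_le_div; lra).
  exists (R0 / 2), del. split; [lra|]. split; [lra|]. intros tau z0 Htau Hz0.
  assert (Hnear : forall t z, box tau del r z0 t z -> Rabs (t - t1) < R0 /\ bnorm (bsub z y) < R0).
  { intros t z [H1 H2]. split; [split_Rabs; lra|].
    pose proof (bnorm_sub_triangle z z0 y). unfold r in H2. lra. }
  assert (HboxO : forall t z, box tau del r z0 t z -> Omega T b t z)
    by (intros t z Hb; destruct (Hnear t z Hb); apply HO1; lra).
  destruct (picard f tau del r M Lc z0 ltac:(lra) ltac:(unfold r; lra) ltac:(lra) HLc HMd HLd)
    as [Y [HY0 HY]].
  - intros t z Hb. destruct (Hnear t z Hb).
    pose proof (HO2 t z (HboxO t z Hb) ltac:(lra) ltac:(lra)).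
    pose proof (bnorm_le_sub (f t z) (f t1 y)). unfold M. lra.
  - intros t z1 z2 H1 H2. destruct (Hnear t z1 H1). destruct (Hnear t z2 H2). apply HO3; lra.
  - intros t z Hb eps He. destruct (Hfc t z (HboxO t z Hb) eps He) as [eta [Heta Hf]].
    exists eta. split; [exact Heta|]. intros s w Hw Hs Hsw. apply Hf; auto.
  - exists Y. split; auto. intros t Ht. destruct (HY t Ht) as [HYr HYd]. split; auto.
    apply HboxO. split; [lra | auto].
Qed.

End LocalTheory.

Lemma limit_at_right_end {X : Banach} (phi : R -> X) (p : R -> R) (c beta : R) : c < beta ->
  continuity_pt p beta ->
  (forall t s, c <= t <= s -> s < beta -> bnorm (bsub (phi s) (phi t)) <= p s - p t) ->
  exists y, forall s, c <= s < beta -> bnorm (bsub (phi s) y) <= p beta - p s.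
Proof.
  intros Hcb Hp Hinc.
  assert (Hinc_abs : forall t s, c <= t < beta -> c <= s < beta ->
            bnorm (bsub (phi s) (phi t)) <= Rabs (p s - p t)).
  { intros t s Ht Hs. destruct (Rle_or_lt t s).
    - eapply Rle_trans; [apply Hinc; lra | apply Rle_abs].
    - rewrite bnorm_sub_sym, Rabs_minus_sym. eapply Rle_trans; [apply Hinc; lra | apply Rle_abs]. }
  destruct (vanishing_radii (beta - c) ltac:(lra)) as [rn [Hrn Hrn_small]].
  set (sn := fun n => beta - rn n).
  assert (Hsn : forall n, c <= sn n < beta) by (intro n; specialize (Hrn n); unfold sn; lra).
  assert (Hsn_conv : forall eta, 0 < eta -> exists N, forall n, (N <= n)%nat -> beta - sn n < eta)
    by (intros eta He; destruct (Hrn_small eta He) as [N HN]; exists N; intros n Hn;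
        specialize (HN n Hn); unfold sn; lra).
  assert (Hp_near : forall eps, 0 < eps -> exists N, forall n, (N <= n)%nat ->
            Rabs (p (sn n) - p beta) < eps).
  { intros eps He. destruct (continuity_pt_eps p beta Hp eps He) as [d [Hd Hnear]].
    destruct (Hsn_conv d Hd) as [N HN]. exists N. intros n Hn. apply Hnear.
    specialize (HN n Hn). pose proof (Hsn n). rewrite Rabs_left; lra. }
  destruct (bcomplete (fun n => phi (sn n))) as [y Hy].
  { intros eps He. destruct (Hp_near (eps/2) ltac:(lra)) as [N HN]. exists N. intros m n Hm Hn.
    pose proof (Hinc_abs (sn n) (sn m) (Hsn n) (Hsn m)).
    pose proof (HN m Hm). pose proof (HN n Hn). unfold bsub in *. split_Rabs; lra. }
  exists y. intros s Hs. apply le_epsilon. intros eps He.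
  destruct (Hp_near (eps/2) ltac:(lra)) as [N1 HN1].
  destruct (Hy (eps/2) ltac:(lra)) as [N2 HN2].
  destruct (Hsn_conv (beta - s) ltac:(lra)) as [N3 HN3].
  set (n := max N1 (max N2 N3)).
  assert (Hn : (N1 <= n)%nat /\ (N2 <= n)%nat /\ (N3 <= n)%nat).
  { unfold n. repeat split; [apply Nat.le_max_l|..];
      eapply Nat.le_trans; [|apply Nat.le_max_r| |apply Nat.le_max_r];
      [apply Nat.le_max_l | apply Nat.le_max_r]. }
  destruct Hn as [Hn1 [Hn2 Hn3]].
  pose proof (HN1 n Hn1). pose proof (HN2 n Hn2). pose proof (HN3 n Hn3). pose proof (Hsn n).
  pose proof (Hinc s (sn n) ltac:(lra) ltac:(lra)).
  pose proof (bnorm_sub_triangle (phi s) (phi (sn n)) y) as Htri.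
  rewrite (bnorm_sub_sym (phi s) (phi (sn n))) in Htri. unfold bsub in *. split_Rabs; lra.
Qed.

Lemma above_mono l s s' : above l s -> s <= s' -> above l s'.
Proof. destruct l; simpl; lra. Qed.

Lemma below_mono u s s' : below u s' -> s <= s' -> below u s.
Proof. destruct u; simpl; lra. Qed.

Lemma below_upper_le u1 u2 t : below u1 t -> upper_le u1 u2 -> below u2 t.
Proof. destruct u1, u2; simpl; tauto || lra. Qed.

Lemma glue_solution {X : Banach} T b (f : R -> X -> X) x al be phi (Y : R -> X) tau del :
  is_sol T b f x al be phi -> 0 <= tau -> below be tau -> 0 < del -> Y tau = phi tau ->
  (forall t, Rabs (t - tau) < del -> Omega T b t (Y t) /\ has_deriv Y t (f t (Y t))) ->
  is_sol T b f x al (Some (tau + del)) (fun t => if Rle_dec t tau then phi t else Y t).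
Proof.
  intros [[Hal0 _] [Hphi0 Hphi]] Htau Hbe Hdel HY0 HY.
  set (glued := fun t => if Rle_dec t tau then phi t else Y t).
  assert (Hleft : forall t, t <= tau -> glued t = phi t)
    by (intros t Ht; unfold glued; destruct (Rle_dec t tau); [reflexivity | lra]).
  assert (Hright : forall t, tau < t -> glued t = Y t)
    by (intros t Ht; unfold glued; destruct (Rle_dec t tau); [lra | reflexivity]).
  split; [split; [exact Hal0 | simpl; lra]|]. split; [rewrite Hleft by lra; exact Hphi0|].
  intros t [Hat Hbt]. simpl in Hbt.
  destruct (Rlt_le_dec t tau) as [Hlt|Hge].
  - destruct (Hphi t (conj Hat (below_mono be t tau Hbe ltac:(lra)))) as [HO Hd].
    rewrite Hleft by lra. split; [exact HO|].
    apply dif_has_deriv, (dif_local phi glued t _ (tau - t)); [lra | |apply has_deriv_dif, Hd].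
    intros s Hs. apply Hleft. split_Rabs; lra.
  - destruct (Rle_lt_or_eq_dec _ _ Hge) as [Hgt| <-].
    + destruct (HY t ltac:(split_Rabs; lra)) as [HO Hd].
      rewrite Hright by lra. split; [exact HO|].
      apply dif_has_deriv, (dif_local Y glued t _ (t - tau)); [lra | |apply has_deriv_dif, Hd].
      intros s Hs. apply Hright. split_Rabs; lra.
    + destruct (Hphi tau (conj Hat Hbe)) as [HO Hd].
      destruct (HY tau ltac:(rewrite Rminus_diag, Rabs_R0; lra)) as [_ HYd].
      rewrite Hleft by lra. split; [exact HO|].
      rewrite HY0 in HYd. apply dif_has_deriv, (dif_glue phi Y glued tau); auto;
        apply has_deriv_dif; assumption.
Qed.

Lemma MJ_locally_lipschitz {X : Banach} T a b (f : R -> X -> X) g : hyp_MJ T a b f g ->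
  forall s z, OmegaT T a b s z -> exists r L, 0 < r /\ 0 <= L /\
    forall t z1 z2, Rabs (t - s) < r -> Rabs (z1 - z) < r -> Rabs (z2 - z) < r ->
      Rabs (g t z1 - g t z2) <= L * Rabs (z1 - z2).
Proof.
  intros [_ [HgL _]] s z Hsz. destruct Hsz as [HTs Hz].
  destruct (HgL s z (conj HTs Hz)) as [r [L [Hr HL]]].
  set (rT := match T with Some T' => T' - Rabs s | None => 1 end).
  assert (HrT : 0 < rT) by (unfold rT; destruct T; simpl in HTs; lra).
  set (r' := Rmin (Rmin r rT) (Rmin (z - a) (b - z))).
  assert (Hr' : 0 < r' /\ r' <= r /\ r' <= rT /\ r' <= z - a /\ r' <= b - z).
  { unfold r'. pose proof (Rmin_l (Rmin r rT) (Rmin (z - a) (b - z))).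
    pose proof (Rmin_r (Rmin r rT) (Rmin (z - a) (b - z))).
    pose proof (Rmin_l r rT). pose proof (Rmin_r r rT).
    pose proof (Rmin_l (z - a) (b - z)). pose proof (Rmin_r (z - a) (b - z)).
    repeat split; try lra. repeat apply Rmin_glb_lt; lra. }
  exists r', (Rmax L 0). split; [lra|]. split; [apply Rmax_r|].
  intros t z1 z2 Ht Hz1 Hz2.
  assert (Hin : forall w, Rabs (w - z) < r' -> OmegaT T a b t w).
  { intros w Hw. split; [|split_Rabs; lra].
    unfold rT in Hr'. destruct T as [T'|]; simpl in *; [split_Rabs; lra | exact I]. }
  eapply Rle_trans; [apply HL; auto; lra|].
  apply Rmult_le_compat_r; [apply Rabs_pos | apply Rmax_l].
Qed.

Section MaximalSolutions.
Context {X : Banach}.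
Variables (T : option R) (a b : R) (f : R -> X -> X) (g : R -> R -> R) (x : X).
Variables (al be alt bet : option R) (phi : R -> X) (psi : R -> R).
Hypothesis HLC : hyp_LC T b f.
Hypothesis HMJ : hyp_MJ T a b f g.
Hypothesis Hphi : is_max_sol T b f x al be phi.
Hypothesis Hpsi : is_max_solR T a b g (bnorm x) alt bet psi.

Lemma phi_domain s : 0 <= s -> below be s -> in_int al be s.
Proof.
  destruct Hphi as [[[Hal _] _] _]. intros Hs Hbe. split; [apply (above_mono al 0 s)|]; auto.
Qed.

Lemma psi_domain s : 0 <= s -> below bet s -> in_int alt bet s.
Proof.
  destruct Hpsi as [[[Hal _] _] _]. intros Hs Hbe. split; [apply (above_mono alt 0 s)|]; auto.
Qed.

Lemma phi_solves s : 0 <= s -> below be s -> Omega T b s (phi s) /\ dif phi s (f s (phi s)).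
Proof.
  intros Hs Hbe. destruct Hphi as [[_ [_ Hsol]] _].
  destruct (Hsol s (phi_domain s Hs Hbe)) as [HO Hd]. split; [exact HO | apply has_deriv_dif, Hd].
Qed.

Lemma psi_solves s : 0 <= s -> below bet s ->
  OmegaT T a b s (psi s) /\ derivable_pt_lim psi s (g s (psi s)).
Proof. intros Hs Hbe. destruct Hpsi as [[_ [_ Hsol]] _]. apply Hsol, psi_domain; auto. Qed.

(** Forward in time, [t |-> ||phi t||] is a Dini subsolution and [psi] a
    solution of [z' = g(t, z)], so the comparison principle applies. *)
Lemma norm_below_majorant d : 0 <= d -> below be d -> below bet d ->
  forall s, 0 <= s <= d -> bnorm (phi s) <= psi s.
Proof.
  intros Hd Hbe Hbet s Hs.
  assert (Hphi_s : forall s, 0 <= s <= d -> Omega T b s (phi s) /\ dif phi s (f s (phi s)))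
    by (intros r Hr; apply phi_solves; [lra | apply (below_mono be r d); auto; lra]).
  assert (Hpsi_s : forall s, 0 <= s <= d -> OmegaT T a b s (psi s) /\
                               derivable_pt_lim psi s (g s (psi s)))
    by (intros r Hr; apply psi_solves; [lra | apply (below_mono bet r d); auto; lra]).
  rewrite <- (bsub_zero_r (phi s)).
  apply (comparison (fun r => bnorm (bsub (phi r) bzero)) psi g 0 d); auto.
  - intros r Hr. apply continuity_pt_norm_sub, (dif_continuous _ _ _ (proj2 (Hphi_s r Hr))).
  - intros r Hr. apply derivable_continuous_pt. exists (g r (psi r)). apply Hpsi_s, Hr.
  - intros r Hr. destruct (Hphi_s r ltac:(lra)) as [HO Hdif].
    apply (right_dini_le_weaken _ _ (bnorm (f r (phi r)))); [|apply dif_right_dini_norm, Hdif].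
    destruct HMJ as [_ [_ [_ Hdom]]]. rewrite bsub_zero_r.
    specialize (Hdom r (phi r) HO). rewrite Rabs_right in Hdom by lra. exact Hdom.
  - intros r Hr. apply derivable_right_dini_ge, Hpsi_s. lra.
  - intros r Hr. destruct (MJ_locally_lipschitz T a b f g HMJ r (psi r) (proj1 (Hpsi_s r ltac:(lra))))
      as [rho [L [Hrho [HL Hlip]]]].
    exists rho, L. split; [|split]; auto. intros t z1 z2 Ht. apply Hlip. split_Rabs; lra.
  - destruct Hphi as [[_ [Hx _]] _]. destruct Hpsi as [[_ [Hx' _]] _].
    rewrite Hx, Hx', bsub_zero_r. lra.
Qed.

(** Along the comparison, (MJ)(ii)-(iii) bound the speed of [phi] by that of [psi]. *)
Lemma speed_below_majorant t : 0 <= t -> below be t -> below bet t ->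
  bnorm (f t (phi t)) <= g t (psi t).
Proof.
  intros Ht Hbe Hbet. destruct HMJ as [_ [_ [Hmono Hdom]]].
  destruct (phi_solves t Ht Hbe) as [HO _]. destruct (psi_solves t Ht Hbet) as [[_ Hpsib] _].
  eapply Rle_trans; [apply Hdom, HO|]. rewrite Rabs_right by lra.
  apply Hmono; auto; [|apply bnorm_nonneg | apply (norm_below_majorant t); auto; lra | lra].
  destruct HO as [HT _]. rewrite Rabs_right in HT by lra. exact HT.
Qed.

Lemma increment_below_majorant t s : 0 <= t <= s -> below be s -> below bet s ->
  bnorm (bsub (phi s) (phi t)) <= psi s - psi t.
Proof.
  intros Hts Hbe Hbet.
  assert (Hbe' : forall r, r <= s -> below be r) by (intros r Hr; apply (below_mono be r s); auto).
  assert (Hbet' : forall r, r <= s -> below bet r) by (intros r Hr; apply (below_mono bet r s); auto).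
  set (h := fun r => bnorm (bsub (phi r) (phi t)) - psi r).
  assert (h s - h t <= 0 * (s - t)); [|unfold h in *; rewrite bsub_self, bnorm_zero in *; lra].
  apply dini_mean_value; [lra| |].
  - intros r Hr. apply continuity_pt_minus.
    + apply continuity_pt_norm_sub, (dif_continuous _ _ _ (proj2 (phi_solves r ltac:(lra) (Hbe' r ltac:(lra))))).
    + apply derivable_continuous_pt. exists (g r (psi r)). apply psi_solves; [lra | apply Hbet'; lra].
  - intros r Hr. replace 0 with (g r (psi r) - g r (psi r)) by ring.
    apply right_dini_sub.
    + apply (right_dini_le_weaken _ _ (bnorm (f r (phi r)))).
      * apply speed_below_majorant; [lra | apply Hbe' | apply Hbet']; lra.
      * apply dif_right_dini_norm, (phi_solves r ltac:(lra) (Hbe' r ltac:(lra))).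
    + apply derivable_right_dini_ge, psi_solves; [lra | apply Hbet'; lra].
Qed.

(** If [be = beta]
    with [beta < bet], then [phi] has a limit [y] at [beta] with
    [||y|| <= psi beta < b]; a local solution through a point near [beta]
    then extends [phi] beyond [beta], contradicting maximality. *)
Lemma no_blowup_before_majorant beta : be = Some beta -> below bet beta -> False.
Proof.
  intros Hbe Hbet.
  destruct Hphi as [Hphi_sol Hmax]. pose proof Hphi_sol as [[_ Hbeta0] [Hphi0 _]].
  rewrite Hbe in Hbeta0. simpl in Hbeta0.
  destruct (psi_solves beta ltac:(lra) Hbet) as [[HTbeta [_ Hpsib]] Hpsid].
  pose proof (derivable_continuous_pt psi beta (exist _ _ Hpsid)) as Hpsic.
  destruct (limit_at_right_end phi psi 0 beta Hbeta0 Hpsic) as [y Hy].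
  { intros t s Hts Hs. apply increment_below_majorant; [lra | rewrite Hbe; simpl; lra |].
    apply (below_mono bet s beta); auto; lra. }
  assert (HOy : Omega T b beta y).
  { split; [exact HTbeta|].
    pose proof (Hy 0 ltac:(lra)). pose proof (bnorm_le_sub y (phi 0)) as Htri. rewrite bnorm_sub_sym in Htri.
    pose proof (norm_below_majorant 0 ltac:(lra) ltac:(rewrite Hbe; simpl; lra)
                  ltac:(apply (below_mono bet 0 beta); auto; lra) 0 ltac:(lra)).
    lra. }
  destruct (uniform_local_existence T b f HLC beta y HOy) as [rho [del [Hrho [Hdel Hloc]]]].
  destruct (continuity_pt_eps psi beta Hpsic rho Hrho) as [dpsi [Hdpsi Hpsi_near]].
  set (gap := Rmin (Rmin del rho) (Rmin dpsi beta) / 2).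
  assert (Hgap : 0 < gap /\ gap < del /\ gap < rho /\ gap < dpsi /\ gap < beta).
  { unfold gap. pose proof (Rmin_l (Rmin del rho) (Rmin dpsi beta)).
    pose proof (Rmin_r (Rmin del rho) (Rmin dpsi beta)).
    pose proof (Rmin_l del rho). pose proof (Rmin_r del rho).
    pose proof (Rmin_l dpsi beta). pose proof (Rmin_r dpsi beta).
    assert (0 < Rmin (Rmin del rho) (Rmin dpsi beta)) by (repeat apply Rmin_glb_lt; lra).
    repeat split; lra. }
  set (tau := beta - gap).
  assert (Hz : bnorm (bsub (phi tau) y) < rho).
  { eapply Rle_lt_trans; [apply Hy; unfold tau; lra|].
    pose proof (Hpsi_near tau ltac:(unfold tau; rewrite Rabs_left; lra)). split_Rabs; lra. }
  destruct (Hloc tau (phi tau) ltac:(unfold tau; split_Rabs; lra) Hz) as [Y [HY0 HY]].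
  pose proof (glue_solution T b f x al be phi Y tau del Hphi_sol ltac:(unfold tau; lra)
                ltac:(rewrite Hbe; simpl; unfold tau; lra) Hdel HY0 HY) as Hext.
  destruct (Hmax _ _ _ Hext) as [_ Hle]. rewrite Hbe in Hle. simpl in Hle. unfold tau in Hle. lra.
Qed.

Lemma majorant_lifespan : upper_le bet be.
Proof.
  enough (Hcases : forall e e', be = e -> bet = e' -> upper_le e' e) by auto.
  intros [beta|] [beta'|] He He'; simpl; auto.
  - apply Rnot_lt_le. intro Hlt. apply (no_blowup_before_majorant beta He). rewrite He'. exact Hlt.
  - apply (no_blowup_before_majorant beta He). rewrite He'. exact I.
Qed.

End MaximalSolutions.

Theorem mainTheorem7 (X : Banach) (T : option R) (a b : R)
    (f : R -> X -> X) (g : R -> R -> R) (x : X)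
    (al be alt bet : option R) (phi : R -> X) (psi : R -> R) :
  pos_ext T -> a < 0 -> 0 < b ->
  hyp_LC T b f -> hyp_MJ T a b f g ->
  bnorm x < b ->
  is_max_sol T b f x al be phi ->
  is_max_solR T a b g (bnorm x) alt bet psi ->
  upper_le bet be /\
  (forall t, 0 <= t -> below bet t -> bnorm (phi t) <= psi t).
Proof.
  intros _ _ _ HLC HMJ _ Hphi Hpsi.
  assert (Hlife : upper_le bet be) by (eapply majorant_lifespan; eauto).
  split; [exact Hlife|].
  intros t Ht Hbet.
  apply (norm_below_majorant T a b f g x al be alt bet phi psi HMJ Hphi Hpsi t); auto; [|lra].
  apply (below_upper_le bet be t); auto.
Qed.
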